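(* Let $U$ be a right strict binary search tree, let $x$ be a node that is the topmost node with its label, and suppose the right child $z$ of $x$ exists and is not the topmost node with its label. Then the label of $z$ is the least label occurring in $U$ that is strictly greater than the labels of all topmost nodes lying in the complete subtree at $x$.
   Context: A right strict binary search tree is a rooted binary tree (each node has a possibly empty left subtree and a possibly empty right subtree) whose nodes are labelled by elements of the totally ordered set $\{1<2<3<\cdots\}$ such that the label of each node is greater than or equal to the label of every node in its left subtree and strictly less than the label of every node in its right subtree. Labels may repeat. The complete subtree at a node $x$ consists of $x$ and all its descendants. All nodes with a given label $a$ are pairwise in ancestor–descendant relation, and the topmost node labelled $a$ is the node labelled $a$ that is an ancestor of all other nodes labelled $a$; a node is called topmost if it is the topmost node with its own label. *)

From mathcomp Require Import all_boot.
Set Implicit Arguments. Unset Strict Implicit. Unset Printing Implicit Defensive.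

Inductive tree := Leaf | Node of tree & nat & tree.

Fixpoint labels (t : tree) : seq nat :=
  match t with
  | Leaf => [::]
  | Node l a r => labels l ++ a :: labels r
  end.

Fixpoint rsbst (t : tree) : bool :=
  match t with
  | Leaf => true
  | Node l a r =>
      [&& 0 < a, all (fun b => b <= a) (labels l),
          all (fun b => a < b) (labels r), rsbst l & rsbst r]
  end.

(* Nodes are addressed by their path from the root:
   false = go to left child, true = go to right child. *)
Fixpoint subtree (t : tree) (p : seq bool) : tree :=
  match p with
  | [::] => t
  | b :: p' =>
      match t with
      | Leaf => Leaf
      | Node l _ r => subtree (if b then r else l) p'
      end
  end.

Definition label_at (t : tree) (p : seq bool) : option nat :=
  if subtree t p is Node _ a _ then Some a else None.

(* The node at p is an ancestor (or equal) of the node at q iff p is a prefix of q. *)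
Definition topmost (t : tree) (p : seq bool) : Prop :=
  exists a, label_at t p = Some a /\
            forall q, label_at t q = Some a -> prefix p q.

Definition above_topmost_in (t : tree) (x : seq bool) (c : nat) : Prop :=
  forall q b, topmost t (x ++ q) -> label_at t (x ++ q) = Some b -> b < c.

From mathcomp Require Import all_boot.
Set Implicit Arguments. Unset Strict Implicit. Unset Printing Implicit Defensive.

(* Let [a] be the label of [x] and [z] that of its right child; in a search
   tree every node labelled strictly between [a] and [z] lies below [x].
   Since the right child is not topmost, the topmost [z]-node lies strictly
   above [x], with [x] in its left subtree; so every label below [x] is at
   most [z], and a topmost node below [x] cannot carry [z].  Conversely any
   [c] bounding the topmost labels below [x] exceeds [a] (take [x] itself),
   and if [c < z] the topmost [c]-node would lie below [x], giving [c < c]. *)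

Lemma label_at_cons l a r b p :
  label_at (Node l a r) (b :: p) = label_at (if b then r else l) p.
Proof. by []. Qed.

Lemma label_at_labels t p c : label_at t p = Some c -> c \in labels t.
Proof.
elim: t p => [|l IHl a r IHr] [|[] p] //=; rewrite ?label_at_cons.
- by case=> <-; rewrite mem_cat mem_head orbT.
- by move/IHr; rewrite mem_cat inE => ->; rewrite !orbT.
- by move/IHl; rewrite mem_cat => ->.
Qed.

Lemma rsbst_label_desc t p d b s e :
  rsbst t -> label_at t p = Some d -> label_at t (p ++ b :: s) = Some e ->
  if b then d < e else e <= d.
Proof.
elim: p t => [|b' p IH] [|l a r] //= /and5P[_ Hl Hr Rl Rr];
  rewrite !label_at_cons.
- by case=> <-; case: b => /label_at_labels; [apply: (allP Hr) | apply: (allP Hl)].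
- by case: b'; [apply: IH | apply: IH].
Qed.

Lemma rsbst_same_label_desc t p b s z :
  rsbst t -> label_at t p = Some z -> label_at t (p ++ b :: s) = Some z ->
  b = false.
Proof. by case: b => // R Hp /(rsbst_label_desc R Hp); rewrite ltnn. Qed.

Lemma topmost_prefix t p q c :
  topmost t p -> label_at t p = Some c -> label_at t q = Some c -> prefix p q.
Proof. by case=> a [-> Htop] [<-]; apply: Htop. Qed.

Lemma rsbst_topmost_exists t c :
  rsbst t -> c \in labels t -> exists2 p, topmost t p & label_at t p = Some c.
Proof.
elim: t => [|l IHl a r IHr] //= /and5P[_ Hl Hr Rl Rr].
have [-> _|nca] := eqVneq c a.
  by exists [::] => //; exists a; split=> // q _; rewrite prefix0s.
have lt_lr d e : d \in labels l -> e \in labels r -> d < e.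
  by move=> /(allP Hl) da /(allP Hr); apply: leq_ltn_trans.
have root_ne_c : label_at (Node l a r) [::] <> Some c.
  by case=> E; rewrite E eqxx in nca.
rewrite mem_cat inE (negPf nca) /= => /orP[cl|cr].
- have [p topp Hp] := IHl Rl cl.
  exists (false :: p) => //; exists c.
  split=> // -[/root_ne_c|[] q] //; rewrite label_at_cons.
  + by move/label_at_labels/(lt_lr _ _ cl); rewrite ltnn.
  + by move=> Hq; rewrite prefix_cons eqxx (topmost_prefix topp Hp Hq).
- have [p topp Hp] := IHr Rr cr.
  exists (true :: p) => //; exists c.
  split=> // -[/root_ne_c|[] q] //; rewrite label_at_cons.
  + by move=> Hq; rewrite prefix_cons eqxx (topmost_prefix topp Hp Hq).
  + by move/label_at_labels/lt_lr/(_ cr); rewrite ltnn.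
Qed.

Lemma rsbst_between_right_child_desc t x p a z c :
  rsbst t -> label_at t x = Some a -> label_at t (rcons x true) = Some z ->
  label_at t p = Some c -> a < c -> c < z -> exists q, p = x ++ q.
Proof.
elim: t x p => [|l IHl d r IHr] x p; first by case: x.
case/and5P=> _ Hl Hr Rl Rr.
have lt_d_r q e : label_at r q = Some e -> d < e.
  by move/label_at_labels/(allP Hr).
have le_l_d q e : label_at l q = Some e -> e <= d.
  by move/label_at_labels/(allP Hl).
move=> + + + ac cz; case: x => [|[] x] /=; rewrite ?label_at_cons.
- case=> da _; rewrite -da in ac; case: p => [|[] p]; rewrite ?label_at_cons.
  + by case=> dc; rewrite dc ltnn in ac.
  + by exists (true :: p).
  + by move/le_l_d=> cd; have := leq_ltn_trans cd ac; rewrite ltnn.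
- move=> /[dup] /lt_d_r da Hx Hz; case: p => [|[] p]; rewrite ?label_at_cons.
  + by case=> cd; have := ltn_trans da ac; rewrite cd ltnn.
  + by move=> Hp; have [q ->] := IHr x p Rr Hx Hz Hp ac cz; exists q.
  + by move/le_l_d=> cd; have := leq_ltn_trans cd (ltn_trans da ac); rewrite ltnn.
- move=> Hx /[dup] /le_l_d zd Hz; case: p => [|[] p]; rewrite ?label_at_cons.
  + by case=> dc; rewrite -dc in cz; have := leq_ltn_trans zd cz; rewrite ltnn.
  + by move/lt_d_r=> dc; have := leq_ltn_trans zd (ltn_trans dc cz); rewrite ltnn.
  + by move=> Hp; have [q ->] := IHl x p Rl Hx Hz Hp ac cz; exists q.
Qed.

Lemma nontopmost_right_child_below_left t x a z :
  rsbst t -> label_at t x = Some a -> label_at t (rcons x true) = Some z ->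
  ~ topmost t (rcons x true) ->
  exists p s, [/\ topmost t p, label_at t p = Some z & x = p ++ false :: s].
Proof.
move=> R Hx Hz Hnt.
have az : a < z.
  by have := rsbst_label_desc (b := true) (s := [::]) R Hx; rewrite cats1; apply.
have [p topp Hp] := rsbst_topmost_exists R (label_at_labels Hz).
have /prefixP[s] := topmost_prefix topp Hp Hz.
case/lastP: s => [|s e]; first by rewrite cats0 => Ep; case: Hnt; rewrite Ep.
rewrite -rcons_cat => /rcons_inj[Ex _].
case: s Ex => [|b s] Ex.
  by move: Hx; rewrite Ex cats0 Hp => -[za]; rewrite za ltnn in az.
have b_left : b = false.
  apply: (rsbst_same_label_desc (s := rcons s true) R Hp).
  by rewrite -rcons_cons -rcons_cat -Ex.
by exists p, s; rewrite -b_left.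
Qed.

Lemma above_topmost_in_left t p s z :
  rsbst t -> topmost t p -> label_at t p = Some z ->
  above_topmost_in t (p ++ false :: s) z.
Proof.
move=> R topp Hp q b topb Hb.
have := rsbst_label_desc (b := false) (s := s ++ q) R Hp.
rewrite -cat_cons catA => /(_ _ Hb); rewrite leq_eqVlt => /orP[/eqP bz|//].
rewrite bz in Hb topb; have := size_prefix (topmost_prefix topb Hb Hp).
by rewrite -catA size_cat /= addnS ltnNge leq_addr.
Qed.

Lemma above_topmost_in_right_child_le t x z c :
  rsbst t -> topmost t x -> label_at t (rcons x true) = Some z ->
  c \in labels t -> above_topmost_in t x c -> z <= c.
Proof.
move=> R topx Hz cU Hc; rewrite leqNgt; apply/negP=> cz.
have [a [Hx _]] := topx.
have ac : a < c by apply: (Hc [::]); rewrite cats0.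
have [p topp Hp] := rsbst_topmost_exists R cU.
have [q Ep] := rsbst_between_right_child_desc R Hx Hz Hp ac cz.
by rewrite Ep in topp Hp; have := Hc q c topp Hp; rewrite ltnn.
Qed.

Theorem mainTheorem20 (U : tree) (x : seq bool) (z : nat) :
  rsbst U ->
  topmost U x ->
  label_at U (rcons x true) = Some z ->
  ~ topmost U (rcons x true) ->
  [/\ z \in labels U,
      above_topmost_in U x z &
      forall c, c \in labels U -> above_topmost_in U x c -> z <= c].
Proof.
move=> R topx Hz Hnt.
have [a [Hx _]] := topx.
have [p [s [topp Hp Ex]]] := nontopmost_right_child_below_left R Hx Hz Hnt.
split.
- exact: label_at_labels Hz.
- by rewrite Ex; apply: above_topmost_in_left.
- by move=> c; apply: above_topmost_in_right_child_le.
Qed.
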